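(* Let $G$ be a finite non-abelian group such that the non-centralizer graph $\Upsilon_G$ is $n$-regular. Then $n$ is even, $|G|\equiv 0\pmod 8$, and $n+2\leq |G|\leq 4n/3$.
   Context: For a finite group $G$, $C_G(x)$ denotes the centralizer of $x\in G$. The non-centralizer graph $\Upsilon_G$ is the simple graph with vertex set $G$ in which two distinct vertices $x,y$ are adjacent if and only if $C_G(x)\neq C_G(y)$. A graph is $n$-regular if every vertex has degree exactly $n$. *)

From mathcomp Require Import all_boot all_fingroup.
Set Implicit Arguments. Unset Strict Implicit. Unset Printing Implicit Defensive.
Local Open Scope group_scope.

Definition noncent_adj (gT : finGroupType) (G : {group gT}) (x y : gT) : bool :=
  (x != y) && ('C_G[x] != 'C_G[y]).

Definition noncent_deg (gT : finGroupType) (G : {group gT}) (x : gT) : nat :=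
  #|[set y in G | noncent_adj G x y]|.

Definition noncent_regular (gT : finGroupType) (G : {group gT}) (n : nat) : Prop :=
  forall x, x \in G -> noncent_deg G x = n.

From mathcomp Require Import all_boot all_fingroup.
From mathcomp Require Import cyclic center commutator abelian zify.
Set Implicit Arguments. Unset Strict Implicit. Unset Printing Implicit Defensive.

(* In the non-centralizer graph, x is adjacent exactly to the y outside the set
   of elements with the same centralizer as x.  That set always contains the
   coset x Z(G), and for x = 1 it is Z(G), so regularity forces it to be x Z(G)
   for every x.  Since x^-1 has the same centralizer as x, every square is
   central: G/Z(G) is elementary abelian of exponent 2, and not cyclic, so 4
   divides its order.  A non-trivial commutator is then a central involution, so
   |Z(G)| is even, and everything follows from |G| = |Z(G)| |G/Z(G)| and
   n = |G| - |Z(G)|. *)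

Section CentralizerFacts.

Variables (gT : finGroupType) (G : {group gT}).
Local Open Scope group_scope.

Lemma cent1V (x : gT) : 'C[x^-1] = 'C[x].
Proof. by apply/setP=> y; rewrite cent1C groupV cent1C. Qed.

Lemma subcent1MZ (x z : gT) : z \in 'Z(G) -> 'C_G[x * z] = 'C_G[x].
Proof.
move=> Zz; apply/setP=> y; rewrite !in_setI.
case Gy: (y \in G) => //=.
have Cz : z \in 'C[y] by apply/cent1P/commute_sym; apply: centerC Gy _ Zz.
by rewrite cent1C (groupMr x Cz) cent1C.
Qed.

Lemma subcent1_eq_group (y : gT) : y \in G -> ('C_G[y] == G) = (y \in 'Z(G)).
Proof.
move=> Gy; rewrite /center inE Gy -sub_cent1 /=.
by apply/eqP/idP => [<-|/setIidPl //]; apply: subsetIr.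
Qed.

Lemma four_dvd_card_quotient_center :
  ~~ abelian G -> 2.-abelem (G / 'Z(G)) -> 4 %| #|G / 'Z(G)|.
Proof.
move=> nabG abelQ; have [k cardQ] := p_natP (abelem_pgroup abelQ).
have ncycQ : ~~ cyclic (G / 'Z(G)).
  by apply: contra nabG => /cyclic_center_factor_abelian.
rewrite cardQ (@dvdn_exp2l 2 2) //.
case: k cardQ => [|[|//]] cardQ; case/negP: ncycQ.
- by move/eqP: cardQ; rewrite -trivg_card1 => /eqP->; apply: cyclic1.
- by apply: prime_cyclic; rewrite cardQ.
Qed.

Section CentralSquares.

Hypothesis sqr_center : {in G, forall x, x ^+ 2 \in 'Z(G)}.

Lemma quotient_center_abelem : 2.-abelem (G / 'Z(G)).
Proof.
apply: exponent2_abelem; apply/exponentP=> _ /morphimP[x Nx Gx ->].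
by rewrite -morphX //= coset_id // sqr_center.
Qed.

(* A non-trivial commutator [x, y] is central, so [x, y]^2 = [x, y^2] = 1. *)
Lemma center_even : ~~ abelian G -> 2 %| #|'Z(G)|.
Proof.
move=> nabG; have /subsetPn[x Gx] := nabG.
rewrite -sub_cent1 => /subsetPn[y Gy ncxy].
have Zc : [~ x, y] \in 'Z(G).
  have nZG : G \subset 'N('Z(G)) by apply/normal_norm/center_normal.
  have sG'Z := der1_min nZG (abelem_abelian quotient_center_abelem).
  by apply: (subsetP sG'Z); rewrite derg1 mem_commg.
have c2 : [~ x, y] ^+ 2 = 1.
  rewrite -commgX; last by apply: centerC Gy _ Zc.
  by apply/eqP/commgP; apply: centerC Gx _ (sqr_center Gy).
have c_nt : [~ x, y] != 1.
  by apply: contra ncxy => /commgP/commute_sym/cent1P.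
have <- : #[[~ x, y]] = 2.
  by apply/prime_nt_dvdP; rewrite ?order_eq1 ?order_dvdn ?c2.
exact: order_dvdG.
Qed.

End CentralSquares.

End CentralizerFacts.

Section NonCentralizerGraph.

Variables (gT : finGroupType) (G : {group gT}).
Local Open Scope group_scope.

Definition same_cent (x : gT) : {set gT} := [set y in G | 'C_G[y] == 'C_G[x]].

Lemma noncent_degE (x : gT) : noncent_deg G x = #|G| - #|same_cent x|.
Proof.
rewrite /noncent_deg.
have -> : [set y in G | noncent_adj G x y] = G :\: same_cent x.
  apply/setP=> y; rewrite !inE /noncent_adj; case: (y \in G) => //=.
  by case: eqVneq => [->|_]; rewrite ?eqxx // andbT eq_sym.
by rewrite cardsD (setIidPr _) //; apply/subsetP=> y; rewrite inE => /andP[].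
Qed.

Lemma same_cent1 : same_cent 1 = 'Z(G).
Proof.
apply/setP=> y; rewrite inE cent11T setIT.
case Gy: (y \in G) => /=; first exact: subcent1_eq_group.
by apply/esym/negbTE; apply: contraFN Gy => /(subsetP (center_sub G)).
Qed.

Lemma lcoset_center_sub_same_cent (x : gT) :
  x \in G -> x *: 'Z(G) \subset same_cent x.
Proof.
move=> Gx; apply/subsetP=> _ /lcosetP[z Zz ->].
have Gz := subsetP (center_sub G) z Zz.
by rewrite inE groupM ?subcent1MZ ?eqxx.
Qed.

Variables (n : nat).
Hypothesis regG : noncent_regular G n.

Lemma noncent_regular_deg : n = #|G| - #|'Z(G)|.
Proof. by rewrite -(regG (group1 G)) noncent_degE same_cent1. Qed.

Lemma noncent_regular_same_cent (x : gT) :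
  x \in G -> same_cent x = x *: 'Z(G).
Proof.
move=> Gx; apply/esym/eqP.
rewrite eqEcard lcoset_center_sub_same_cent //= card_lcoset.
have sSG : same_cent x \subset G by apply/subsetP=> y; rewrite inE => /andP[].
have := regG Gx; rewrite noncent_regular_deg noncent_degE => eq_deg.
by rewrite -(subKn (subset_leq_card sSG)) eq_deg subKn ?subset_leq_card ?center_sub.
Qed.

(* x^-1 has the same centralizer as x, so it lies in x Z(G). *)
Lemma noncent_regular_sqr_center : {in G, forall x, x ^+ 2 \in 'Z(G)}.
Proof.
move=> x Gx; have : x^-1 \in same_cent x by rewrite inE groupV Gx cent1V eqxx.
rewrite noncent_regular_same_cent // mem_lcoset => /groupVr.
by rewrite invMg invgK expgS expg1.
Qed.

End NonCentralizerGraph.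

Theorem theorem2p12 (gT : finGroupType) (G : {group gT}) (n : nat) :
  ~~ abelian G -> noncent_regular G n ->
  [/\ ~~ odd n, 8 %| #|G| & n + 2 <= #|G| /\ 3 * #|G| <= 4 * n].
Proof.
Local Open Scope group_scope.
move=> nabG regG; have sqrZ := noncent_regular_sqr_center regG.
have /dvdnP[a cardZ] := center_even sqrZ nabG.
have /dvdnP[b cardQ] :=
  four_dvd_card_quotient_center nabG (quotient_center_abelem sqrZ).
have cardG : #|G| = (#|'Z(G)| * #|G / 'Z(G)|)%N.
  by rewrite card_quotient ?normal_norm ?center_normal ?Lagrange ?center_sub.
have a_gt0 : (0 < a)%N by move: (cardG_gt0 'Z(G)); rewrite cardZ; lia.
have b_gt0 : (0 < b)%N by move: (cardG_gt0 (G / 'Z(G))); rewrite cardQ; lia.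
rewrite (noncent_regular_deg regG) cardG cardZ cardQ.
split; [lia | lia | split; nia].
Qed.
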